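(* $\mathbb{T}$ satisfies Axiom A, witnessed by the orderings $q\leq_n p$ iff $q\leq p$ and the sets of splitting levels $A_q$ and $A_p$ coincide on their first $n+1$ elements.
   Context: $\mathbb{T}$ is the tree-forcing (ordered by inclusion) consisting of perfect trees $p\subseteq 3^{<\omega}$ together with a set $A_p\subseteq\omega$ (the splitting levels of $p$) such that: for every $t\in p$, $|t|\in A_p$ iff $t$ is a splitting node of $p$; every splitting node $t$ is fully splitting (i.e. $t^\frown i\in p$ for every $i\in 3$); for every $s\supseteq \mathrm{stem}(p)$ which is not splitting, $s^\frown 2\notin p$; and for all non-splitting $s,t\in p$ with $|s|=|t|$ and all $i\in 2$, $s^\frown i\in p\Leftrightarrow t^\frown i\in p$. Here $s^\frown i$ denotes the sequence $s$ extended by the value $i$, and $\mathrm{stem}(p)$ is the longest node of $p$ comparable with every node of $p$. *)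

From mathcomp Require Import all_boot.
Set Implicit Arguments. Unset Strict Implicit. Unset Printing Implicit Defensive.

Definition node := seq 'I_3.
Definition tree3 := node -> Prop.

Definition two : 'I_3 := @Ordinal 3 2 isT.

Definition splitting (p : tree3) (t : node) : Prop :=
  exists i j : 'I_3, i <> j /\ p (rcons t i) /\ p (rcons t j).

Definition is_tree (p : tree3) : Prop :=
  p [::] /\ (forall s t : node, prefix s t -> p t -> p s).

Definition perfect (p : tree3) : Prop :=
  is_tree p /\ forall t, p t -> exists s, prefix t s /\ p s /\ splitting p s.

Definition comparable (s t : node) : Prop := prefix s t \/ prefix t s.

Definition is_stem (p : tree3) (st : node) : Prop :=
  p st /\ (forall t, p t -> comparable st t) /\
  (forall s, p s -> (forall t, p t -> comparable s t) -> size s <= size st).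

Record Tcond := mkT { tr : tree3 ; lev : nat -> Prop }.

Definition inT (c : Tcond) : Prop :=
  let p := tr c in let A := lev c in
  [/\ perfect p,
      (forall t, p t -> (A (size t) <-> splitting p t)),
      (forall t, p t -> splitting p t -> forall i : 'I_3, p (rcons t i)),
      (forall st s, is_stem p st -> prefix st s -> p s -> ~ splitting p s ->
          ~ p (rcons s two)) &
      (forall s t, p s -> p t -> ~ splitting p s -> ~ splitting p t ->
          size s = size t -> forall i : 'I_3, i < 2 ->
          (p (rcons s i) <-> p (rcons t i)))].

Definition Tle (q p : Tcond) : Prop := forall t, tr q t -> tr p t.

(** is_nth A k a : a is the k-th element (counting from 0) of A in increasing order *)
Fixpoint is_nth (A : nat -> Prop) (k a : nat) : Prop :=
  match k with
  | 0 => A a /\ forall b, b < a -> ~ A b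
  | k'.+1 => A a /\ exists a', [/\ a' < a, is_nth A k' a' &
                                  forall b, a' < b -> b < a -> ~ A b]
  end.

Definition Tle_n (n : nat) (q p : Tcond) : Prop :=
  Tle q p /\ forall k, k <= n -> forall a, is_nth (lev q) k a <-> is_nth (lev p) k a.

(** Axiom A (Baumgartner), for a forcing notion given by its set of conditions
    [cond] and order [le] (q <= p means q is stronger), witnessed by [len]. *)
Definition compatible {P : Type} (cond : P -> Prop) (le : P -> P -> Prop) (p q : P) :=
  exists r, [/\ cond r, le r p & le r q].

Definition antichain {P : Type} (cond : P -> Prop) (le : P -> P -> Prop) (W : P -> Prop) :=
  (forall r, W r -> cond r) /\
  (forall r r', W r -> W r' -> r <> r' -> ~ compatible cond le r r').

Definition countable_set {P : Type} (S : P -> Prop) :=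
  exists f : nat -> P, forall x, S x -> exists k, f k = x.

Definition AxiomA {P : Type} (cond : P -> Prop) (le : P -> P -> Prop)
  (len : nat -> P -> P -> Prop) : Prop :=
      (forall n p, cond p -> len n p p) /\
      (forall n p q r, cond p -> cond q -> cond r -> len n r q -> len n q p -> len n r p) /\
      (forall p q, cond p -> cond q -> len 0 q p -> le q p) /\
      (forall n p q, cond p -> cond q -> len n.+1 q p -> len n q p) /\
      (forall f : nat -> P, (forall n, cond (f n)) -> (forall n, len n (f n.+1) (f n)) ->
         exists q, cond q /\ forall n, len n q (f n)) /\
      (forall p n (W : P -> Prop), cond p -> antichain cond le W ->
         exists q, [/\ cond q, len n q p &
                    countable_set (fun r => W r /\ compatible cond le r q)]).

From Pilot Require Import Defs.
From mathcomp Require Import all_boot.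
From Stdlib Require Import Classical ClassicalEpsilon FunctionalExtensionality PropExtensionality.
Set Implicit Arguments. Unset Strict Implicit. Unset Printing Implicit Defensive.

(* A condition of T is determined by its stem s and a pattern g : nat -> option bool
   saying, for every level m >= size s, whether m is a splitting level (None) or with
   which digit all nodes of level m continue (Some b).  In these coordinates q <=_n p
   says that the pattern of q refines that of p and keeps its first n+1 splitting levels;
   hence a fusion sequence is constant below its n-th splitting level from stage n on, and
   the diagonal pattern is its fusion.
   For an antichain W, stage k+1 refines stage k above its (n+k)-th splitting level so
   that, for each of the finitely many nodes tau on that level, the cone above tau lies
   below a member of W as soon as some condition inside that cone does.  Any member of W
   compatible with the fusion q of the stages is compatible inside such a cone of q, so it
   is the member chosen for that cone: these members are indexed by nodes. *)

Definition asbool (P : Prop) : bool := if excluded_middle_informative P then true else false.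

Lemma asboolP (P : Prop) : reflect P (asbool P).
Proof. by rewrite /asbool; case: excluded_middle_informative => h; constructor. Qed.

Lemma ex_least (P : nat -> Prop) :
  (exists m, P m) -> exists m, P m /\ forall b, b < m -> ~ P b.
Proof.
move=> [m0 Pm0]; have exP : exists m, asbool (P m) by exists m0; apply/asboolP.
case: (ex_minnP exP) => m /asboolP Pm minP; exists m; split=> // b bm /asboolP /minP.
by rewrite leqNgt bm.
Qed.

Definition infinite (X : nat -> Prop) := forall m, exists2 m', m <= m' & X m'.

Section NthElement.
Variable X : nat -> Prop.

Lemma is_nth_mem k a : is_nth X k a -> X a.
Proof. by case: k => [[]|k []]. Qed.

Lemma is_nth_uniq k a a' : is_nth X k a -> is_nth X k a' -> a = a'.
Proof.
elim: k a a' => [|k IH] a a' /=.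
  move=> [Xa mina] [Xa' mina']; case: (ltngtP a a') => // aa'.
    by case: (mina' _ aa').
  by case: (mina _ aa').
move=> [Xa [b [ba Xb gapa]]] [Xa' [b' [ba' Xb' gapa']]].
rewrite -(IH _ _ Xb Xb') in ba' gapa'; case: (ltngtP a a') => // aa'.
  by case: (gapa' _ ba aa').
by case: (gapa _ ba' aa').
Qed.

Lemma is_nth_lt k k' a a' : is_nth X k a -> is_nth X k' a' -> k < k' -> a < a'.
Proof.
elim: k' a' => [//|k' IH] a' Xa /= [_ [b [ba' Xb _]]].
rewrite ltnS leq_eqVlt => /orP [/eqP ek|kk']; last exact: ltn_trans (IH _ Xa Xb kk') ba'.
by rewrite ek in Xa; rewrite (is_nth_uniq Xa Xb).
Qed.

Lemma is_nth_le k k' a a' : is_nth X k a -> is_nth X k' a' -> k <= k' -> a <= a'.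
Proof.
move=> Xa Xa'; rewrite leq_eqVlt => /orP [/eqP ek|kk']; last exact/ltnW/(is_nth_lt Xa Xa').
by rewrite ek in Xa; rewrite (is_nth_uniq Xa Xa').
Qed.

Lemma is_nth_geq k a : is_nth X k a -> k <= a.
Proof. by elim: k a => [//|k IH] a /= [_ [b [ba /IH kb _]]]; apply: leq_ltn_trans ba. Qed.

Lemma is_nth_exists : infinite X -> forall k, exists a, is_nth X k a.
Proof.
move=> infX; elim=> [|k [a Xa]].
  by have [m _ Xm] := infX 0; apply: ex_least; exists m.
have [m1 am1 Xm1] := infX a.+1.
have [|m [[am Xm] minm]] := @ex_least (fun m => a < m /\ X m); first by exists m1.
by exists m; split=> //; exists a; split=> // b ab bm Xb; apply: (minm b bm).
Qed.

Lemma is_nth_index m : X m -> exists j, is_nth X j m.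
Proof.
elim: m.+1 {-2}m (ltnSn m) => // N IH a; rewrite ltnS => aN Xa.
case: (classic (exists2 b, b < a & X b)) => [[b0 b0a Xb0]|nob]; last first.
  by exists 0; split=> // b ba Xb; apply: nob; exists b.
have exb : exists b, asbool (b < a /\ X b) by exists b0; apply/asboolP.
have boundb b : asbool (b < a /\ X b) -> b <= a by move/asboolP => [/ltnW].
case: (ex_maxnP exb boundb) => c /asboolP [ca Xc] maxc.
have [j Xj] := IH c (leq_trans ca aN) Xc.
exists j.+1; split=> //; exists c; split=> // d cd da Xd.
by have := maxc d (introT (asboolP _) (conj da Xd)); rewrite leqNgt cd.
Qed.

End NthElement.

Lemma is_nth_ext X Y k a :
  (forall m, m <= a -> (X m <-> Y m)) -> is_nth X k a -> is_nth Y k a.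
Proof.
elim: k a => [|k IH] a XY /=.
  move=> [Xa minX]; split; first exact/XY.
  by move=> b ba Yb; apply: (minX b ba); apply/(XY b (ltnW ba)).
move=> [Xa [b [ba Xb gap]]]; split; first exact/XY.
exists b; split=> //.
  by apply: IH Xb => m mb; apply/XY/(leq_trans mb)/ltnW.
by move=> d bd da Yd; apply: (gap d bd da); apply/(XY d (ltnW da)).
Qed.

Lemma is_nth_agree X Y n b : (forall m, m <= b -> (X m <-> Y m)) -> is_nth X n b ->
  forall k, k <= n -> forall a, is_nth X k a <-> is_nth Y k a.
Proof.
move=> XY Xb k kn a; have Yb : is_nth Y n b by apply: is_nth_ext Xb.
split=> Ha; apply: is_nth_ext (Ha) => m ma.
  by apply: XY; apply: leq_trans ma (is_nth_le Ha Xb kn).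
by apply: iff_sym; apply: XY; apply: leq_trans ma (is_nth_le Ha Yb kn).
Qed.

Lemma is_nth_agree_mem X Y n b :
  (forall k, k <= n -> forall a, is_nth X k a <-> is_nth Y k a) ->
  is_nth X n b -> forall m, m <= b -> X m -> Y m.
Proof.
move=> XY Xb m mb /is_nth_index [j Xm].
have jn : j <= n by rewrite leqNgt; apply/negP => /(is_nth_lt Xb Xm); rewrite ltnNge mb.
exact/(is_nth_mem (X := Y))/(XY j jn).
Qed.

Lemma Tle_n_refl n p : Tle_n n p p.
Proof. by split. Qed.

Lemma Tle_n_trans n q r p : Tle_n n q r -> Tle_n n r p -> Tle_n n q p.
Proof.
move=> [qr qrN] [rp rpN]; split=> [t /qr /rp //|k kn a].
exact: iff_trans (qrN k kn a) (rpN k kn a).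
Qed.

Lemma Tle_n_weaken n n' q p : n' <= n -> Tle_n n q p -> Tle_n n' q p.
Proof. by move=> n'n [qp qpN]; split=> // k kn'; apply/qpN/(leq_trans kn'). Qed.

Lemma Tle_n_chain n (f : nat -> Tcond) : (forall k, Tle_n (n + k) (f k.+1) (f k)) ->
  forall k k', k <= k' -> Tle_n (n + k) (f k') (f k).
Proof.
move=> hf k k' /subnKC <-; elim: (k' - k) => [|d IH]; first by rewrite addn0; apply: Tle_n_refl.
rewrite addnS; apply: Tle_n_trans (Tle_n_weaken _ (hf _)) IH.
by rewrite leq_add2l leq_addr.
Qed.

Definition pattern := nat -> option bool.

Definition one : 'I_3 := @Ordinal 3 1 isT.
Definition digit (b : bool) : 'I_3 := if b then one else ord0.

Lemma ord3_cases (x : 'I_3) : [\/ x = ord0, x = one | x = two].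
Proof.
case: x => [[|[|[|m]]] hx] //; [constructor 1|constructor 2|constructor 3]; exact: val_inj.
Qed.

Lemma digit_inj : injective digit.
Proof. by case=> [] [] // /(congr1 val). Qed.

Lemma digit_neq_two b : digit b <> two.
Proof. by case: b => /(congr1 val). Qed.

Definition allowed (s : node) (g : pattern) (i : nat) (x : 'I_3) : Prop :=
  if i < size s then x = nth ord0 s i else if g i is Some b then x = digit b else True.

Definition ctree (s : node) (g : pattern) : tree3 :=
  fun t => forall i, i < size t -> allowed s g i (nth ord0 t i).

Definition clevels (s : node) (g : pattern) : nat -> Prop :=
  fun m => size s <= m /\ g m = None.

Definition valid_code (s : node) (g : pattern) : Prop :=
  g (size s) = None /\ infinite (fun m => g m = None).

Definition ccond (s : node) (g : pattern) : Tcond := mkT (ctree s g) (clevels s g).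

Section Codes.
Variables (s : node) (g : pattern).

Lemma allowed_lt i x : i < size s -> allowed s g i x <-> x = nth ord0 s i.
Proof. by rewrite /allowed => ->. Qed.

Lemma allowed_ge i x :
  size s <= i -> allowed s g i x <-> if g i is Some b then x = digit b else True.
Proof. by rewrite /allowed leqNgt => /negbTE ->. Qed.

Lemma allowed_ex i : exists x, allowed s g i x.
Proof.
rewrite /allowed; case: (i < size s); first by exists (nth ord0 s i).
by case: (g i) => [b|]; [exists (digit b) | exists ord0].
Qed.

Lemma ctree_nil : ctree s g [::].
Proof. by []. Qed.

Lemma ctree_rcons t x : ctree s g (rcons t x) <-> ctree s g t /\ allowed s g (size t) x.
Proof.
split=> [gtx|[gt ax] i]; last first.
  rewrite size_rcons ltnS leq_eqVlt nth_rcons => /orP [/eqP ->|it]; first by rewrite ltnn eqxx.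
  by rewrite it; apply: gt.
split; last by have := gtx (size t); rewrite size_rcons nth_rcons ltnn eqxx; apply.
by move=> i it; have := gtx i; rewrite size_rcons nth_rcons it; apply; apply: ltnW.
Qed.

Lemma prefix_nth (u t : node) i : prefix u t -> i < size u -> nth ord0 u i = nth ord0 t i.
Proof. by rewrite prefixE => /eqP E iu; rewrite -{1}E nth_take. Qed.

Lemma ctree_prefix u t : prefix u t -> ctree s g t -> ctree s g u.
Proof.
move=> ut gt i iu; rewrite (prefix_nth ut iu); apply: gt.
exact: leq_trans iu (size_prefix ut).
Qed.

Lemma ctree_self : ctree s g s.
Proof. by move=> i si; rewrite allowed_lt. Qed.

Lemma ctree_extend t m : ctree s g t -> size t <= m ->
  exists u, [/\ prefix t u, size u = m & ctree s g u].
Proof.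
move=> gt /subnKC <-; elim: (m - size t) => [|d [u [tu su gu]]].
  by exists t; rewrite addn0 prefix_refl.
have [x ax] := allowed_ex (size u); exists (rcons u x); split.
- exact: prefix_trans tu (prefix_rcons u x).
- by rewrite size_rcons su addnS.
- by apply/ctree_rcons.
Qed.

Lemma ctree_take t : ctree s g t -> size t <= size s -> t = take (size t) s.
Proof.
move=> gt ts; apply: (@eq_from_nth _ ord0) => [|i it]; first by rewrite size_takel.
by rewrite nth_take //; apply/(allowed_lt _ (leq_trans it ts))/gt.
Qed.

Lemma ctree_comparable t : ctree s g t -> Defs.comparable s t.
Proof.
move=> gt; case: (leqP (size t) (size s)) => ts.
  by right; rewrite (ctree_take gt ts) prefix_take.
left; rewrite prefixE; apply/eqP/(@eq_from_nth _ ord0) => [|i]; first exact/size_takel/ltnW.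
rewrite size_takel ?(ltnW ts) // => si; rewrite nth_take //.
by apply/(allowed_lt _ si)/gt/(ltn_trans si).
Qed.

Lemma ctree_splitting t :
  ctree s g t -> splitting (ctree s g) t <-> clevels s g (size t).
Proof.
move=> gt; split=> [[i [j [ij [/ctree_rcons [_ ai] /ctree_rcons [_ aj]]]]]|[st gtN]].
  case: (ltnP (size t) (size s)) => st.
    by case: ij; move: ai aj; rewrite !allowed_lt // => -> ->.
  split=> //; move: ai aj; rewrite !allowed_ge //.
  by case: (g (size t)) => // b ai aj; case: ij; rewrite ai aj.
by exists ord0, one; split=> //; split; apply/ctree_rcons; rewrite allowed_ge ?gtN.
Qed.

Lemma clevels_infinite : valid_code s g -> infinite (clevels s g).
Proof.
move=> [_ ginf] m; have [m' mm' gm'] := ginf (maxn m (size s)).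
exists m'; first exact: leq_trans (leq_maxl _ _) mm'.
by split=> //; apply: leq_trans (leq_maxr _ _) mm'.
Qed.

Lemma is_nth0_clevels a : valid_code s g -> is_nth (clevels s g) 0 a <-> a = size s.
Proof.
move=> [gs _]; split=> [[[sa _] mins]|->]; last by split=> // b bs [/(leq_trans bs)]; rewrite ltnn.
by apply/eqP; rewrite eqn_leq sa andbT leqNgt; apply/negP => /mins; apply.
Qed.

Lemma ccond_inT : valid_code s g -> inT (ccond s g).
Proof.
move=> vg; have [gs ginf] := vg; split=> /=.
- split; first by split=> [|u t]; [exact: ctree_nil | exact: ctree_prefix].
  move=> t gt; have [m tm [sm mN]] := clevels_infinite vg (size t).
  have [u [tu su gu]] := ctree_extend gt tm.
  by exists u; split=> //; split=> //; apply/ctree_splitting; rewrite ?su.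
- by move=> t gt; rewrite ctree_splitting.
- move=> t gt /(ctree_splitting gt) [st gtN] i; apply/ctree_rcons; split=> //.
  by rewrite allowed_ge // gtN.
- move=> st u [_ [_ maxst]] stu gu nsplit /ctree_rcons [_].
  have su : size s <= size u.
    apply: leq_trans (size_prefix stu); apply: maxst ctree_self _ => t.
    exact: ctree_comparable.
  rewrite allowed_ge //; case E: (g (size u)) => [b|]; first exact/nesym/digit_neq_two.
  by case: nsplit; apply/ctree_splitting.
- by move=> t u gt gu _ _ e i _; rewrite !ctree_rcons e; tauto.
Qed.

End Codes.

Arguments ctree_self : clear implicits.

Section Decoding.
Variable c : Tcond.
Hypothesis hc : inT c.
Let p := tr c.
Let A := lev c.

Lemma tr_prefix u t : prefix u t -> p t -> p u.
Proof. by case: hc => [[[_ pref] _]] _ _ _ _; apply: pref. Qed.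

Lemma lev_splitting t : p t -> A (size t) <-> splitting p t.
Proof. by case: hc => _ levP _ _ _; apply: levP. Qed.

Lemma splitting_succ t : p t -> splitting p t -> forall i, p (rcons t i).
Proof. by case: hc => _ _ full _ _; apply: full. Qed.

Lemma tr_succ t : p t -> exists x, p (rcons t x).
Proof.
move=> pt; case: hc => [[_ perf]] _ _ _ _.
have [u [tu [pu [i [_ [_ [pui _]]]]]]] := perf t pt.
case: (ltnP (size t) (size u)) => tsu.
  exists (nth ord0 u (size t)); apply: tr_prefix pu.
  by move: tu; rewrite prefixE => /eqP {1}<-; rewrite -take_nth // prefix_take.
have -> : t = u by move: tu; rewrite prefixE => /eqP; rewrite (take_oversize tsu).
by exists i.
Qed.

Lemma tr_level m : exists t, p t /\ size t = m.
Proof.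
elim: m => [|m [t [pt <-]]]; first by exists [::]; case: hc => [[[]]].
by have [x ptx] := tr_succ pt; exists (rcons t x); rewrite size_rcons.
Qed.

Lemma lev_infinite : infinite A.
Proof.
move=> m; have [t [pt <-]] := tr_level m; case: hc => [[_ perf]] _ _ _ _.
have [u [tu [pu spu]]] := perf t pt.
by exists (size u); [exact: size_prefix | apply/lev_splitting].
Qed.

Definition first_level : nat := epsilon (inhabits 0) (is_nth A 0).

Lemma first_levelP : A first_level /\ forall b, b < first_level -> ~ A b.
Proof. exact: epsilon_spec (is_nth_exists lev_infinite 0). Qed.

Lemma tr_uniq_below m u t :
  m <= first_level -> p u -> p t -> size u = m -> size t = m -> u = t.
Proof.
elim: m u t => [|m IH] u t mlev pu pt; first by move=> /size0nil -> /size0nil ->.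
case/lastP: u pu => // u x pux; case/lastP: t pt => // t y pty.
rewrite !size_rcons => -[su] [st].
have ut : u = t.
  apply: IH (ltnW mlev) _ _ su st; first exact: tr_prefix (prefix_rcons u x) pux.
  exact: tr_prefix (prefix_rcons t y) pty.
rewrite -ut in pty *; case: (classic (x = y)) => [-> //|xy].
have /(proj2 first_levelP) [] : size u < first_level by rewrite su.
by apply/(lev_splitting (tr_prefix (prefix_rcons _ _) pux)); exists x, y.
Qed.

Definition stem_of : node := epsilon (inhabits [::]) (fun t => p t /\ size t = first_level).

Lemma stem_ofP : p stem_of /\ size stem_of = first_level.
Proof. exact: epsilon_spec (tr_level first_level). Qed.

Lemma tr_take_stem t : p t -> size t <= first_level -> t = take (size t) stem_of.
Proof.
move=> pt tlev; have [ps ss] := stem_ofP.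
apply: (tr_uniq_below (m := size t)) => //; first exact: tr_prefix (prefix_take _ _) ps.
by rewrite size_takel // ss.
Qed.

Lemma stem_of_prefix t : p t -> first_level <= size t -> prefix stem_of t.
Proof.
move=> pt levt; have [ps ss] := stem_ofP.
have pta : p (take first_level t) by apply: tr_prefix (prefix_take _ _) pt.
have e : take first_level t = take first_level stem_of.
  by rewrite {1}(tr_take_stem pta) ?size_takel.
by rewrite -ss take_size in e; rewrite -e prefix_take.
Qed.

Lemma stem_of_is_stem : is_stem p stem_of.
Proof.
have [ps ss] := stem_ofP; split=> //; split=> [t pt|u pu ucomp].
  case: (leqP (size t) first_level) => tlev.
    by right; rewrite (tr_take_stem pt tlev) prefix_take.
  by left; apply/stem_of_prefix/ltnW.
rewrite ss leqNgt; apply/negP => levu.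
have sps : splitting p stem_of by apply/lev_splitting; rewrite ?ss; case: first_levelP.
have digit_u i : nth ord0 u first_level = i.
  have [pre|pre] := ucomp _ (splitting_succ ps sps i).
    by rewrite (prefix_nth pre) // nth_rcons ss ltnn eqxx.
  by rewrite -(prefix_nth pre) ?size_rcons ?ss // nth_rcons ss ltnn eqxx.
by have := digit_u one; rewrite (digit_u ord0).
Qed.

Lemma succ_unique t x y : ~ splitting p t -> p (rcons t x) -> p (rcons t y) -> x = y.
Proof. by move=> nsp ptx pty; apply: NNPP => xy; apply: nsp; exists x, y. Qed.

Definition level_digit (i : nat) : bool :=
  asbool (exists t, [/\ p t, size t = i & p (rcons t one)]).

(* Above the stem a non-splitting node never continues with [two], and by uniformity
   of the levels all its continuations agree with those of the other nodes of its level. *)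
Lemma succ_level_digit t : p t -> first_level <= size t -> ~ A (size t) ->
  p (rcons t (digit (level_digit (size t)))).
Proof.
move=> pt levt nA; have nsp : ~ splitting p t by move/(lev_splitting pt).
have [x ptx] := tr_succ pt.
have x2 : x <> two.
  move=> ex; case: hc => _ _ _ notwo _; rewrite ex in ptx.
  exact: notwo stem_of t stem_of_is_stem (stem_of_prefix pt levt) pt nsp ptx.
rewrite /level_digit; case: asboolP => [[u [pu su pu1]]|no1] /=.
  case: hc => _ _ _ _ unif; apply/(unif u t pu pt _ nsp su one isT) => //.
  by move/(lev_splitting pu); rewrite su.
case: (ord3_cases x) => [ex|ex|//]; first by rewrite -ex.
by case: no1; exists t; rewrite -ex.
Qed.

Definition pattern_of (i : nat) : option bool :=
  if asbool (A i) then None else Some (level_digit i).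

Lemma tr_rcons t x : p t ->
  p (rcons t x) <-> allowed stem_of pattern_of (size t) x.
Proof.
move=> pt; have [ps ss] := stem_ofP.
case: (ltnP (size t) first_level) => tlev.
  rewrite allowed_lt ?ss //; have et := tr_take_stem pt (ltnW tlev).
  split=> [ptx|->].
    have := tr_take_stem ptx; rewrite size_rcons => /(_ tlev) /(congr1 (nth ord0 ^~ (size t))).
    by rewrite nth_rcons ltnn eqxx nth_take.
  by rewrite {1}et -take_nth ?ss //; apply: tr_prefix (prefix_take _ _) ps.
rewrite allowed_ge ?ss // /pattern_of; case: asboolP => [At|nA].
  by split=> // _; apply/splitting_succ/lev_splitting.
have ptd := succ_level_digit pt tlev nA.
split=> [ptx|->] //; apply: succ_unique ptx ptd.
by move/(lev_splitting pt).
Qed.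

Lemma tr_ctree t : p t <-> ctree stem_of pattern_of t.
Proof.
elim/last_ind: t => [|t x IH]; first by split=> // _; case: hc => [[[]]].
rewrite ctree_rcons -IH; split=> [ptx|[pt]]; last by move/(tr_rcons _ pt).
have pt : p t by apply: tr_prefix ptx; apply: prefix_rcons.
by split=> //; apply/tr_rcons.
Qed.

Lemma lev_clevels m : A m <-> clevels stem_of pattern_of m.
Proof.
rewrite /clevels /pattern_of (proj2 stem_ofP); case: asboolP => [Am|nA]; last by split=> // [[]].
split=> // _; split=> //; rewrite leqNgt; apply/negP => /(proj2 first_levelP); exact.
Qed.

Lemma pattern_of_valid : valid_code stem_of pattern_of.
Proof.
split; first by rewrite /pattern_of (proj2 stem_ofP); case: asboolP => // [[]]; case: first_levelP.
move=> m; have [m' mm' Am'] := lev_infinite m.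
by exists m' => //; rewrite /pattern_of; case: asboolP.
Qed.

End Decoding.

Lemma inT_code c : inT c -> exists sg : node * pattern, valid_code sg.1 sg.2 /\ c = ccond sg.1 sg.2.
Proof.
move=> hc; exists (stem_of c, pattern_of c); split; first exact: pattern_of_valid.
have etr : tr c = ctree (stem_of c) (pattern_of c).
  by apply: functional_extensionality => t; apply: propositional_extensionality; apply: tr_ctree.
have elev : lev c = clevels (stem_of c) (pattern_of c).
  by apply: functional_extensionality => m; apply: propositional_extensionality; apply: lev_clevels.
by rewrite /ccond /= -etr -elev; case: c {hc etr elev}.
Qed.

Definition pattern_le (L : nat) (h g : pattern) : Prop :=
  forall i, L <= i -> g i = None \/ h i = g i.

Lemma pattern_le_trans L g1 g2 g3 : pattern_le L g1 g2 -> pattern_le L g2 g3 -> pattern_le L g1 g3.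
Proof.
move=> le12 le23 i Li; case: (le23 i Li) => [|<-]; first by left.
by case: (le12 i Li) => [->|->]; [left | right].
Qed.

Lemma ctree_sub_allowed s g t h i x : Tle (ccond t h) (ccond s g) ->
  size t <= i -> allowed t h i x -> allowed s g i x.
Proof.
move=> th ti ax; have [u [tu su hu]] := ctree_extend (ctree_self t h) ti.
have hux : ctree t h (rcons u x) by apply/ctree_rcons; split; rewrite ?su.
by have /ctree_rcons [_] := th _ hux; rewrite su.
Qed.

Lemma ctree_sub_pattern s g t h :
  Tle (ccond t h) (ccond s g) -> pattern_le (maxn (size s) (size t)) h g.
Proof.
move=> th i; rewrite geq_max => /andP [si ti].
have := ctree_sub_allowed (x := two) th ti; rewrite !allowed_ge //.
case E: (h i) => [b|]; last by case: (g i) => [b /(_ I) /esym /digit_neq_two []|]; left.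
have := ctree_sub_allowed (x := digit b) th ti; rewrite !allowed_ge // E.
by case: (g i) => [b'|]; [move=> /(_ erefl) /digit_inj -> _; right | left].
Qed.

Lemma ctree_subP s g h : Tle (ccond s h) (ccond s g) <-> pattern_le (size s) h g.
Proof.
split=> [/ctree_sub_pattern|hg t ht i it]; first by rewrite maxnn.
have := ht i it; case: (ltnP i (size s)) => si; first by rewrite !allowed_lt.
by rewrite !allowed_ge //; case: (hg i si) => [->|<-].
Qed.

Lemma ccond_Tle_n s g h n b : pattern_le (size s) h g -> is_nth (clevels s g) n b ->
  (forall m, size s <= m <= b -> h m = g m) -> Tle_n n (ccond s h) (ccond s g).
Proof.
move=> hg gb hgb; split; first exact/ctree_subP.
move=> k kn a; apply: iff_sym; apply: (is_nth_agree _ gb) => // m mb.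
by rewrite /= /clevels; split=> -[sm]; rewrite hgb ?sm.
Qed.

Lemma Tle_n0_stem s g s' g' : valid_code s g -> valid_code s' g' ->
  Tle_n 0 (ccond s' g') (ccond s g) -> s' = s.
Proof.
move=> vg vg' [sub lev0].
have e : size s' = size s.
  by apply/(is_nth0_clevels _ vg)/(lev0 0 (leqnn 0))/(is_nth0_clevels _ vg').
have := ctree_take (sub _ (ctree_self s' g')); rewrite e take_size; exact.
Qed.

Section CodeFusion.
Variables (s : node) (G : nat -> pattern).
Hypothesis G_valid : forall n, valid_code s (G n).
Hypothesis G_Tle_n : forall n, Tle_n n (ccond s (G n.+1)) (ccond s (G n)).

Lemma codes_chain n n' : n <= n' -> Tle_n n (ccond s (G n')) (ccond s (G n)).
Proof. exact: (@Tle_n_chain 0 (fun n => ccond s (G n))). Qed.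

Lemma codes_stable n n' b i : n <= n' -> is_nth (clevels s (G n)) n b ->
  size s <= i <= b -> G n' i = G n i.
Proof.
move=> nn' Gb /andP [si ib]; have [/ctree_subP sub levN] := codes_chain nn'.
case: (sub i si) => [GN|//]; rewrite GN.
have levN' k kn a := iff_sym (levN k kn a).
by case: (is_nth_agree_mem levN' Gb ib (conj si GN)).
Qed.

Lemma codes_stable_diag n i : i <= n -> size s <= i -> G n i = G i i.
Proof.
move=> i_n si; have [b Gb] := is_nth_exists (clevels_infinite (G_valid i)) i.
have ib := is_nth_geq Gb.
by apply: codes_stable i_n Gb _; rewrite si ib.
Qed.

Definition diag_pattern : pattern := fun i => G i i.

Lemma diag_pattern_le n : pattern_le (size s) diag_pattern (G n).
Proof.
move=> i si; case: (leqP n i) => ni; first by have /ctree_subP := (codes_chain ni).1; apply.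
by right; rewrite /diag_pattern (codes_stable_diag (ltnW ni) si).
Qed.

Lemma diag_pattern_stable n b i : is_nth (clevels s (G n)) n b ->
  size s <= i <= b -> diag_pattern i = G n i.
Proof.
move=> Gb sib; case: (leqP n i) => ni; first exact: codes_stable Gb sib.
by case/andP: sib => si _; rewrite /diag_pattern (codes_stable_diag (ltnW ni) si).
Qed.

Lemma diag_pattern_valid : valid_code s diag_pattern.
Proof.
split; first by rewrite /diag_pattern; case: (G_valid (size s)).
move=> m; have [b Gb] := is_nth_exists (clevels_infinite (G_valid m)) m.
have [sb bN] := is_nth_mem Gb; have sbb : size s <= b <= b by rewrite sb leqnn.
by exists b; [exact: is_nth_geq Gb | rewrite (diag_pattern_stable Gb sbb)].
Qed.

Lemma code_fusion : exists2 g, valid_code s g & forall n, Tle_n n (ccond s g) (ccond s (G n)).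
Proof.
exists diag_pattern => [|n]; first exact: diag_pattern_valid.
have [b Gb] := is_nth_exists (clevels_infinite (G_valid n)) n.
exact: ccond_Tle_n (diag_pattern_le n) Gb (fun m => diag_pattern_stable Gb).
Qed.

End CodeFusion.

Lemma fusion (f : nat -> Tcond) : (forall n, inT (f n)) -> (forall n, Tle_n n (f n.+1) (f n)) ->
  exists q, inT q /\ forall n, Tle_n n q (f n).
Proof.
move=> hf hle; have [code Hcode] := choice _ (fun n => inT_code (hf n)).
pose s := (code 0).1; pose G n := (code n).2.
have stem_eq n : (code n).1 = s.
  have [v0 e0] := Hcode 0; have [vn en] := Hcode n.
  by apply: Tle_n0_stem v0 vn _; rewrite -e0 -en; apply: (@Tle_n_chain 0 f hle 0 n).
have ef n : f n = ccond s (G n) by rewrite -(stem_eq n); case: (Hcode n).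
have vG n : valid_code s (G n) by rewrite /G -(stem_eq n); case: (Hcode n).
have leG n : Tle_n n (ccond s (G n.+1)) (ccond s (G n)) by rewrite -!ef.
have [g vg gG] := code_fusion vG leG.
by exists (ccond s g); split=> [|n]; [exact: ccond_inT | rewrite ef].
Qed.

Lemma ctree_restrict t h u : ctree t h u -> size t <= size u -> Tle (ccond u h) (ccond t h).
Proof.
move=> hu tu v hv i iv; have := hv i iv; case: (ltnP i (size u)) => iu.
  by rewrite allowed_lt // => ->; apply: hu.
by rewrite !allowed_ge // (leq_trans tu iu).
Qed.

Lemma comparable_nth (u v : node) i : Defs.comparable u v -> i < size u -> i < size v ->
  nth ord0 u i = nth ord0 v i.
Proof. by case=> uv iu iv; [apply: prefix_nth | apply/esym/prefix_nth]. Qed.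

Definition splice (L : nat) (g h : pattern) : pattern := fun m => if m <= L then g m else h m.

Section Sealing.
Variables (s : node) (W : Tcond -> Prop).

Definition sealing (g : pattern) (tau : node) (h : pattern) : Prop :=
  [/\ valid_code tau h, Tle (ccond tau h) (ccond s g) & exists2 w, W w & Tle (ccond tau h) w].

Definition covers (w : Tcond) (T : tree3) (tau : node) : Prop :=
  forall t, T t -> Defs.comparable t tau -> tr w t.

Definition sealed (g : pattern) (tau : node) : Prop :=
  exists w, W w /\ covers w (ctree s g) tau.

Definition refine_at (g : pattern) (tau : node) : pattern :=
  if asbool (exists h, sealing g tau h)
  then splice (size tau) g (epsilon (inhabits g) (sealing g tau)) else g.

Definition refines (L : nat) (g' g : pattern) : Prop :=
  [/\ valid_code s g', forall m, m <= L -> g' m = g m & pattern_le (size s) g' g].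

Lemma refines_refl L g : valid_code s g -> refines L g g.
Proof. by move=> vg; split=> // i _; right. Qed.

Lemma refines_trans L g1 g2 g3 : refines L g1 g2 -> refines L g2 g3 -> refines L g1 g3.
Proof.
move=> [v1 e12 le12] [_ e23 le23]; split=> // [m mL|]; last exact: pattern_le_trans le12 le23.
by rewrite e12 ?e23.
Qed.

Lemma refines_Tle L g' g : refines L g' g -> Tle (ccond s g') (ccond s g).
Proof. by case=> _ _ /ctree_subP. Qed.

Lemma splice_refines g tau h : size s <= size tau -> valid_code s g -> valid_code tau h ->
  Tle (ccond tau h) (ccond s g) -> refines (size tau) (splice (size tau) g h) g.
Proof.
move=> st [gs _] [_ hinf] sub; split.
- split; first by rewrite /splice st.
  move=> m; have [m' mm' hm'] := hinf (maxn m (size tau).+1).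
  exists m'; first exact: leq_trans (leq_maxl _ _) mm'.
  by rewrite /splice leqNgt (leq_trans (leq_maxr _ _) mm').
- by move=> m mt; rewrite /splice mt.
move=> i si; rewrite /splice; case: leqP => [_|ti]; first by right.
by apply: (ctree_sub_pattern sub); rewrite geq_max si (ltnW ti).
Qed.

Lemma refine_at_refines g tau : size s <= size tau -> valid_code s g ->
  refines (size tau) (refine_at g tau) g.
Proof.
move=> st vg; rewrite /refine_at; case: asboolP => [exh|_]; last exact: refines_refl.
by have [vh sub _] := epsilon_spec (inhabits g) _ exh; apply: splice_refines.
Qed.

Lemma refine_at_sealed g tau : size s <= size tau -> (exists h, sealing g tau h) ->
  sealed (refine_at g tau) tau.
Proof.
move=> st exh; rewrite /refine_at; case: asboolP => // _.
set h := epsilon _ _; have [[hN _] _ [w Ww hw]] := epsilon_spec (inhabits g) _ exh.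
exists w; split=> // t gt ttau; apply: hw => i it; have := gt i it.
case: (ltnP i (size tau)) => itau.
  by rewrite (allowed_lt h _ itau) => _; apply: comparable_nth.
rewrite !allowed_ge ?(leq_trans st itau) // /splice.
by case: leqP => [tau_i|//]; rewrite (_ : i = size tau) ?hN //; apply/eqP; rewrite eqn_leq tau_i.
Qed.

Definition sweep (g : pattern) (l : seq node) : pattern := foldl refine_at g l.

Lemma sweep_refines L l g : {in l, forall tau, size tau = L} -> size s <= L -> valid_code s g ->
  refines L (sweep g l) g.
Proof.
elim: l g => [|tau l IH] g sizel sL vg /=; first exact: refines_refl.
have stau : size tau = L by apply: sizel; rewrite inE eqxx.
have R1 : refines L (refine_at g tau) g by rewrite -stau; apply: refine_at_refines; rewrite ?stau.
have [v1 _ _] := R1; apply: refines_trans (IH _ _ sL v1) R1 => u ul.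
by apply: sizel; rewrite inE ul orbT.
Qed.

Lemma sweep_sealed L l g tau : {in l, forall tau, size tau = L} -> size s <= L -> valid_code s g ->
  tau \in l -> (exists h, sealing (sweep g l) tau h) -> sealed (sweep g l) tau.
Proof.
elim: l g => [//|tau' l IH] g sizel sL vg /=.
have stau' : size tau' = L by apply: sizel; rewrite inE eqxx.
have sizel' : {in l, forall tau, size tau = L} by move=> u ul; apply: sizel; rewrite inE ul orbT.
have R1 : refines L (refine_at g tau') g by rewrite -stau'; apply: refine_at_refines; rewrite ?stau'.
have [v1 _ _] := R1; have Rl := sweep_refines sizel' sL v1.
rewrite inE => /orP [/eqP ->|taul]; first last; first exact: IH.
move=> [h [vh sub Wh]].
have sub' : Tle (ccond tau' h) (ccond s g).
  by move=> u /sub /(refines_Tle Rl) /(refines_Tle R1).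
have st' : size s <= size tau' by rewrite stau'.
have [w [Ww cov]] := refine_at_sealed st' (ex_intro _ h (And3 vh sub' Wh)).
by exists w; split=> // t /(refines_Tle Rl); apply: cov.
Qed.

End Sealing.

Definition nth_level (s : node) (g : pattern) (k : nat) : nat :=
  epsilon (inhabits 0) (is_nth (clevels s g) k).

Lemma nth_levelP s g k : valid_code s g -> is_nth (clevels s g) k (nth_level s g k).
Proof. by move=> vg; apply: epsilon_spec; apply: is_nth_exists (clevels_infinite vg) k. Qed.

Definition nodes_of_size (L : nat) : seq node := [seq val t | t : L.-tuple 'I_3].

Lemma mem_nodes_of_size (t : node) : t \in nodes_of_size (size t).
Proof. exact: (map_f val (mem_enum predT (in_tuple t))). Qed.

Lemma size_nodes_of_size L : {in nodes_of_size L, forall t, size t = L}.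
Proof. by move=> _ /mapP [u _ ->]; rewrite size_tuple. Qed.

Lemma valid_code_restrict t h M : valid_code t h -> exists tau,
  [/\ M <= size tau, ctree t h tau, valid_code tau h & Tle (ccond tau h) (ccond t h)].
Proof.
move=> [_ hinf]; have [m Mm hm] := hinf (maxn M (size t)).
have tm : size t <= m by apply: leq_trans (leq_maxr _ _) Mm.
have [tau [_ stau htau]] := ctree_extend (ctree_self t h) tm.
exists tau; split=> //; first by rewrite stau (leq_trans (leq_maxl _ _) Mm).
  by split; rewrite ?stau.
by apply: ctree_restrict htau _; rewrite stau.
Qed.

Lemma splitting_sub (T T' : tree3) t : (forall u, T u -> T' u) -> splitting T t -> splitting T' t.
Proof. by move=> TT' [i [j [ij [ti tj]]]]; exists i, j; split; [|split; apply: TT']. Qed.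

Lemma clevels_sub_stem s g tau h : valid_code tau h -> Tle (ccond tau h) (ccond s g) ->
  clevels s g (size tau).
Proof.
move=> [hN _] sub; apply/(ctree_splitting (sub _ (ctree_self tau h))).
by apply: splitting_sub sub _; apply/(ctree_splitting (ctree_self tau h)).
Qed.

Section Stages.
Variables (s : node) (W : Tcond -> Prop) (n : nat) (g0 : pattern).
Hypothesis v0 : valid_code s g0.

Fixpoint stage (k : nat) : pattern :=
  if k is k'.+1 then
    sweep s W (stage k') (nodes_of_size (nth_level s (stage k') (n + k')))
  else g0.

Lemma stage_refines k : valid_code s (stage k) ->
  refines s (nth_level s (stage k) (n + k)) (stage k.+1) (stage k).
Proof.
move=> vk; have [sL _] := is_nth_mem (nth_levelP (n + k) vk).
exact: sweep_refines (@size_nodes_of_size _) sL vk.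
Qed.

Lemma stage_valid k : valid_code s (stage k).
Proof. by elim: k => [//|k IH]; case: (stage_refines IH). Qed.

Lemma stage_Tle_n k : Tle_n (n + k) (ccond s (stage k.+1)) (ccond s (stage k)).
Proof.
have [_ agree le] := stage_refines (stage_valid k).
apply: ccond_Tle_n le (nth_levelP _ (stage_valid k)) _ => m /andP [_]; exact: agree.
Qed.

Lemma stage_sealed k tau : size tau = nth_level s (stage k) (n + k) ->
  (exists h, sealing s W (stage k.+1) tau h) -> sealed s W (stage k.+1) tau.
Proof.
move=> stau; have vk := stage_valid k; have [sL _] := is_nth_mem (nth_levelP (n + k) vk).
by apply: sweep_sealed (@size_nodes_of_size _) sL vk _; rewrite -stau mem_nodes_of_size.
Qed.

Lemma compatible_sealed gq x : valid_code s gq ->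
  (forall k, Tle_n (n + k) (ccond s gq) (ccond s (stage k))) ->
  W x -> compatible inT Tle x (ccond s gq) ->
  exists tau, sealed s W gq tau /\
    exists2 r, inT r & Tle r x /\ forall t, tr r t -> ctree s gq t /\ Defs.comparable t tau.
Proof.
move=> vq qstage Wx [r [hr rx rq]].
have [[t h] /= [vh er]] := inT_code hr; subst r.
have [b qb] := is_nth_exists (clevels_infinite vq) n.
have [tau [btau htau vtau tauh]] := valid_code_restrict b vh.
have tauq : Tle (ccond tau h) (ccond s gq) by move=> u /tauh /rq.
have [j qj] := is_nth_index (clevels_sub_stem vtau tauq).
have nj : n <= j by rewrite leqNgt; apply/negP => /(is_nth_lt qj qb); rewrite ltnNge btau.
have [k ejk] : exists k, j = n + k by exists (j - n); rewrite subnKC.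
rewrite ejk in qj.
have lev_tau : size tau = nth_level s (stage k) (n + k).
  by apply: is_nth_uniq (nth_levelP _ (stage_valid k)); apply/((qstage k).2 _ (leqnn _)).
have sub_next : Tle (ccond s gq) (ccond s (stage k.+1)) := (qstage k.+1).1.
have [|w [Ww cov]] := stage_sealed lev_tau.
  by exists h; split=> // [u /tauq /sub_next //|]; exists x => // u /tauh /rx.
exists tau; split; first by exists w; split=> // u /sub_next; apply: cov.
exists (ccond tau h); first exact: ccond_inT.
split=> [u /tauh /rx //|u hu]; split; first exact: tauq.
by case: (ctree_comparable hu); [right | left].
Qed.

End Stages.

Lemma antichain_countable_compatible p n W : inT p -> antichain inT Tle W ->
  exists q, [/\ inT q, Tle_n n q p & countable_set (fun r => W r /\ compatible inT Tle r q)].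
Proof.
move=> hp [_ anti]; have [[s g0] /= [v0 ->]] := inT_code hp.
pose f k := ccond s (stage s W n g0 k).
have fle k : Tle_n k (f k.+1) (f k).
  exact: Tle_n_weaken (leq_addl n k) (stage_Tle_n W n v0 k).
have [gq vq qf] := code_fusion (G := stage s W n g0) (stage_valid W n v0) fle.
have qstage k : Tle_n (n + k) (ccond s gq) (f k).
  apply: Tle_n_trans (qf (n + k)) _.
  exact: (Tle_n_chain (f := f) (stage_Tle_n W n v0)) (leq_addl n k).
exists (ccond s gq); split; [exact: ccond_inT | by have := qstage 0; rewrite addn0 |].
pose witness tau :=
  epsilon (inhabits (ccond s g0)) (fun w => W w /\ covers w (ctree s gq) tau).
exists (fun k => if unpickle k is Some tau then witness tau else ccond s g0) => x [Wx cx].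
have [tau [sealed_tau [r hr [rx rq]]]] := compatible_sealed v0 vq qstage Wx cx.
exists (pickle (tau : seq 'I_3)); rewrite pickleK.
have [Ww cov] := epsilon_spec (inhabits (ccond s g0)) _ sealed_tau.
apply: NNPP => ne; apply: (anti _ _ Ww Wx ne); exists r; split=> // t /rq [qt ct].
exact: cov.
Qed.

Theorem mainTheorem2 : AxiomA inT Tle Tle_n.
Proof.
split; first by move=> n p _; apply: Tle_n_refl.
split; first by move=> n p q r _ _ _; apply: Tle_n_trans.
split; first by move=> p q _ _ [].
split; first by move=> n p q _ _; apply: Tle_n_weaken.
split; first exact: fusion.
by move=> p n W hp; apply: antichain_countable_compatible.
Qed.
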